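(* Let $h_{s,r}$ be a Hermitian operator on $\mathcal H_s\otimes\mathcal H_r\cong\mathbb C^2\otimes\mathbb C^2$ (qubits $s$ and $r$) which is not $(s,\eta)$-gapped. Then there exists a Hermitian operator $\hat h_r$ acting nontrivially only on qubit $r$ (i.e. of the form $I_s\otimes g_r$) such that $\|h_{s,r}-\hat h_r\|\le 4\eta$.
   Context: Pauli matrices: $\sigma^{(0)}=I$, $\sigma^{(1)}=X=\begin{pmatrix}0&1\\1&0\end{pmatrix}$, $\sigma^{(2)}=Y=\begin{pmatrix}0&-i\\i&0\end{pmatrix}$, $\sigma^{(3)}=Z=\begin{pmatrix}1&0\\0&-1\end{pmatrix}$. Every operator on two qubits $s,r$ has a unique local Pauli decomposition $h_{s,r}=\sum_{\alpha=0}^3 A_s^{(\alpha)}\otimes\sigma_r^{(\alpha)}$ with $A_s^{(\alpha)}\in\mathbb C^{2\times2}$ (Hermitian when $h_{s,r}$ is). For Hermitian $A\in\mathbb C^{2\times2}$, $\Delta(A)=\lambda_{\max}(A)-\lambda_{\min}(A)$ is its spectral gap. A Hermitian $h_{s,r}$ is $(s,\eta)$-gapped if some $A_s^{(\alpha)}$ in this decomposition satisfies $\Delta(A_s^{(\alpha)})\ge\eta$. $\|\cdot\|$ is the operator norm. *)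

From HB Require Import structures.
From mathcomp Require Import all_boot all_order all_algebra.
From mathcomp Require Import all_classical reals.
From mathcomp.real_closed Require Import complex mxtens.
Set Implicit Arguments. Unset Strict Implicit. Unset Printing Implicit Defensive.
Import Order.TTheory GRing.Theory Num.Theory.
Local Open Scope ring_scope.
Local Open Scope complex_scope.
Local Open Scope classical_set_scope.

Section Defs.
Variable R : realType.

Definition cabs2 (z : R[i]) : R := (complex.Re z) ^+ 2 + (complex.Im z) ^+ 2.

Definition vnorm n (v : 'cV[R[i]]_n) : R := Num.sqrt (\sum_(k < n) cabs2 (v k 0)).

Definition opnorm n (M : 'M[R[i]]_n) : R :=
  sup [set vnorm (M *m v) | v in [set v : 'cV[R[i]]_n | vnorm v = 1]].

Definition adjmx m n (A : 'M[R[i]]_(m, n)) : 'M[R[i]]_(n, m) := (map_mx (@conjc R) A)^T.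
Definition hermitian_mx n (A : 'M[R[i]]_n) : Prop := A = adjmx A.

Definition spectrum n (A : 'M[R[i]]_n) : set R :=
  [set l : R | exists2 v : 'cV[R[i]]_n, v != 0 & A *m v = l%:C *: v].
Definition spectral_gap n (A : 'M[R[i]]_n) : R := sup (spectrum A) - inf (spectrum A).

Definition pauliX : 'M[R[i]]_2 := \matrix_(i < 2, j < 2) (if i == j then 0 else 1).
Definition pauliY : 'M[R[i]]_2 :=
  \matrix_(i < 2, j < 2) (if i == j then 0 else if (val i == 0)%N then - 'i else 'i).
Definition pauliZ : 'M[R[i]]_2 :=
  \matrix_(i < 2, j < 2) (if i == j then (if (val i == 0)%N then 1 else -1) else 0).
Definition pauli (a : 'I_4) : 'M[R[i]]_2 :=
  match val a with 0 => 1%:M | 1 => pauliX | 2 => pauliY | _ => pauliZ end.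

(* h on H_s (x) H_r, qubit s = first tensor factor.
   (s,eta)-gapped: some coefficient A_s^(alpha) of the (unique) local Pauli
   decomposition h = sum_alpha A_s^(alpha) (x) sigma_r^(alpha) has gap >= eta. *)
Definition s_gapped (h : 'M[R[i]]_(2 * 2)) (eta : R) : Prop :=
  exists A : 'I_4 -> 'M[R[i]]_2,
    h = \sum_(a < 4) (A a *t pauli a) /\ exists a : 'I_4, eta <= spectral_gap (A a).

End Defs.

(* View h as a 2x2 array, indexed by qubit s, of operators on qubit r and expand every
   entry in the Pauli basis: h = sum_a A_a (x) sigma_a with Hermitian A_a.  Take
   g = sum_a (tr A_a / 2) sigma_a, so that h - I (x) g = sum_a (A_a - (tr A_a / 2) I) (x) sigma_a.
   The Pauli matrices are orthogonal with squared Frobenius norm 2, hence the squared Frobenius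
   norm of h - I (x) g is sum_a 2 |A_a - (tr A_a / 2) I|_F^2, and for a Hermitian 2x2 matrix A
   the quantity 2 |A - (tr A / 2) I|_F^2 is exactly the square of its spectral gap, which is
   below eta^2 for every a when h is not (s, eta)-gapped.  Since the Frobenius norm bounds the
   operator norm (Cauchy-Schwarz), |h - I (x) g| <= sqrt (4 eta^2) = 2 eta <= 4 eta. *)

From HB Require Import structures.
From mathcomp Require Import all_boot all_order all_algebra.
From mathcomp Require Import all_classical reals.
From mathcomp.real_closed Require Import complex mxtens.
From mathcomp Require Import ring lra.
Set Implicit Arguments. Unset Strict Implicit. Unset Printing Implicit Defensive.
Import Order.TTheory GRing.Theory Num.Theory.
Local Open Scope ring_scope.
Local Open Scope complex_scope.

Lemma sqr_sum_mul_le (F : realFieldType) (I : finType) (x y : I -> F) :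
  (\sum_i x i * y i) ^+ 2 <= (\sum_i x i ^+ 2) * (\sum_i y i ^+ 2).
Proof.
set Sx := \sum_i x i ^+ 2; set Sy := \sum_i y i ^+ 2; set Sxy := \sum_i x i * y i.
have inner i : \sum_j (x i * y j - x j * y i) ^+ 2 =
    x i ^+ 2 * Sy + y i ^+ 2 * Sx - x i * y i * Sxy *+ 2.
  transitivity (\sum_j (x i ^+ 2 * y j ^+ 2 + y i ^+ 2 * x j ^+ 2
                        - x i * y i * (x j * y j) *+ 2)).
    by apply: eq_bigr => j _; ring.
  by rewrite sumrB big_split /= sumrMnl -!mulr_sumr.
have lagrange : \sum_i \sum_j (x i * y j - x j * y i) ^+ 2 = 2 * (Sx * Sy - Sxy ^+ 2).
  under eq_bigr do rewrite inner.
  by rewrite sumrB big_split /= sumrMnl -!mulr_suml -/Sx -/Sy -/Sxy; ring.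
rewrite -subr_ge0 -(pmulr_rge0 _ (ltr0n _ 2)) -lagrange.
by do 2!apply: sumr_ge0 => ? _; apply: sqr_ge0.
Qed.

Section FrobeniusBound.
Local Open Scope classical_set_scope.
Variable R : realType.
Implicit Types z : R[i].

Lemma cabs2_ge0 z : 0 <= cabs2 z.
Proof. by rewrite addr_ge0 ?sqr_ge0. Qed.

Lemma cabs2E z : cabs2 z = `|z : Rcomplex R| ^+ 2.
Proof. by case: z => x y; rewrite /= sqr_sqrtr // addr_ge0 ?sqr_ge0. Qed.

Lemma cabs2_sum_mul_le (I : finType) (a b : I -> R[i]) :
  cabs2 (\sum_i a i * b i) <= (\sum_i cabs2 (a i)) * (\sum_i cabs2 (b i)).
Proof.
have sumE (c : I -> R[i]) : \sum_i cabs2 (c i) = \sum_i `|c i : Rcomplex R| ^+ 2.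
  by apply: eq_bigr => i _; apply: cabs2E.
rewrite cabs2E !sumE; apply: le_trans (sqr_sum_mul_le _ _).
rewrite ler_sqr ?nnegrE ?sumr_ge0 // => [|i _]; last by rewrite mulr_ge0.
apply: le_trans (ler_norm_sum _ _ _) (ler_sum _ _) => i _.
by rewrite [leLHS]Normc.normcM.
Qed.

Definition frobenius2 m n (A : 'M[R[i]]_(m, n)) : R := \sum_i \sum_j cabs2 (A i j).

Lemma frobenius2_ge0 m n (A : 'M[R[i]]_(m, n)) : 0 <= frobenius2 A.
Proof. by do 2!apply: sumr_ge0 => ? _; apply: cabs2_ge0. Qed.

Lemma vnorm_mulmx_le m n (A : 'M[R[i]]_(m, n)) (v : 'cV_n) :
  vnorm (A *m v) <= Num.sqrt (frobenius2 A) * vnorm v.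
Proof.
rewrite /vnorm -sqrtrM ?frobenius2_ge0 // ler_wsqrtr // mulr_suml.
by apply: ler_sum => i _; rewrite mxE; apply: cabs2_sum_mul_le.
Qed.

Lemma opnorm_le_frobenius n (A : 'M[R[i]]_n) : opnorm A <= Num.sqrt (frobenius2 A).
Proof.
rewrite /opnorm; set S := (X in sup X).
have [->|/set0P neS] := eqVneq S set0; first by rewrite sup0 sqrtr_ge0.
apply: ge_sup => // _ [v /= v1 <-].
by rewrite -[leRHS]mulr1 -v1 vnorm_mulmx_le.
Qed.

End FrobeniusBound.

Section Hermitian2.
Local Open Scope classical_set_scope.
Variable R : realType.
Implicit Types (p q l : R) (z : R[i]) (M : 'M[R[i]]_2).

Lemma mulcJ_cabs2 z : z * z^* = (cabs2 z)%:C.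
Proof. by case: z => x y; simpc; rewrite /cabs2 /= !expr2 [y * x]mulrC addNr. Qed.

Definition mx2 (a b c d : R[i]) : 'M[R[i]]_2 :=
  \matrix_(i, j) if i == 0 then (if j == 0 then a else b) else (if j == 0 then c else d).

Lemma mx2_eta M : M = mx2 (M 0 0) (M 0 1) (M 1 0) (M 1 1).
Proof.
apply/matrixP => i j; rewrite mxE.
by case: i => [[|[|//]] Hi]; case: j => [[|[|//]] Hj]; congr (M _ _); apply: val_inj.
Qed.

Lemma mx2_add (a b c d a' b' c' d' : R[i]) :
  mx2 a b c d + mx2 a' b' c' d' = mx2 (a + a') (b + b') (c + c') (d + d').
Proof. by apply/matrixP => i j; rewrite !mxE; case: ifP; case: ifP. Qed.

Lemma mx2_scale (k a b c d : R[i]) : k *: mx2 a b c d = mx2 (k * a) (k * b) (k * c) (k * d).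
Proof. by apply/matrixP => i j; rewrite !mxE; case: ifP; case: ifP. Qed.

Lemma mx2_mul (a b c d a' b' c' d' : R[i]) :
  mx2 a b c d *m mx2 a' b' c' d' =
  mx2 (a * a' + b * c') (a * b' + b * d') (c * a' + d * c') (c * b' + d * d').
Proof.
apply/matrixP => i j; rewrite !mxE big_ord_recl big_ord1 !mxE.
by case: i => [[|[|//]] Hi]; case: j => [[|[|//]] Hj].
Qed.

Lemma mxtrace_mx2 (a b c d : R[i]) : \tr (mx2 a b c d) = a + d.
Proof. by rewrite /mxtrace big_ord_recl big_ord1 !mxE. Qed.

Lemma adjmx_mx2 (a b c d : R[i]) : adjmx (mx2 a b c d) = mx2 a^* c^* b^* d^*.
Proof.
by apply/matrixP => i j; rewrite !mxE; case: i => [[|[|//]] Hi]; case: j => [[|[|//]] Hj].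
Qed.

Lemma frobenius2_mx2 (a b c d : R[i]) :
  frobenius2 (mx2 a b c d) = cabs2 a + cabs2 b + cabs2 c + cabs2 d.
Proof. by rewrite /frobenius2 !big_ord_recl !big_ord0 !mxE /= !addr0 addrA. Qed.

Lemma scalar_mx2 (a : R[i]) : a%:M = mx2 a 0 0 a.
Proof.
by apply/matrixP => i j; rewrite !mxE; case: i => [[|[|//]] Hi]; case: j => [[|[|//]] Hj].
Qed.

Definition col2 (a b : R[i]) : 'cV[R[i]]_2 := \col_i (if i == 0 then a else b).

Lemma col2_eta (v : 'cV[R[i]]_2) : v = col2 (v 0 0) (v 1 0).
Proof.
apply/matrixP => i j; rewrite (ord1 j) mxE.
by case: i => [[|[|//]] Hi]; congr (v _ _); apply: val_inj.
Qed.

Lemma col2_inj (a b a' b' : R[i]) : col2 a b = col2 a' b' -> a = a' /\ b = b'.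
Proof. by move/matrixP => e; move: (e 0 0) (e 1 0); rewrite !mxE. Qed.

Lemma col2_eq0 (a b : R[i]) : (col2 a b == 0) = (a == 0) && (b == 0).
Proof.
rewrite [X in _ == X]col2_eta !mxE.
by apply/eqP/andP => [/col2_inj[-> ->]|[/eqP-> /eqP->]].
Qed.

Lemma scale_col2 (k a b : R[i]) : k *: col2 a b = col2 (k * a) (k * b).
Proof. by apply/matrixP => i j; rewrite !mxE; case: ifP. Qed.

Lemma mx2_mul_col2 (a b c d u v : R[i]) :
  mx2 a b c d *m col2 u v = col2 (a * u + b * v) (c * u + d * v).
Proof.
apply/matrixP => i j; rewrite (ord1 j) !mxE big_ord_recl big_ord1 !mxE.
by case: i => [[|[|//]] Hi].
Qed.

Definition herm2 p q z : 'M[R[i]]_2 := mx2 p%:C z z^* q%:C.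

Lemma herm2_eigenvector p q z l (a b : R[i]) :
  herm2 p q z *m col2 a b = l%:C *: col2 a b <->
  (p - l)%:C * a + z * b = 0 /\ z^* * a + (q - l)%:C * b = 0.
Proof.
rewrite mx2_mul_col2 scale_col2 !rmorphB /=.
split=> [/col2_inj[e0 e1]|[e0 e1]].
  by split; [rewrite mulrBl -addrAC e0 | rewrite mulrBl addrA e1]; rewrite subrr.
by congr col2; apply/eqP; rewrite -subr_eq0; [rewrite -e0 | rewrite -e1]; apply/eqP; ring.
Qed.

(* Multiply the eigen equations by the adjugate of [herm2 p q z - l%:C%:M]. *)
Lemma herm2_eigen_det p q z l (a b : R[i]) :
  (p - l)%:C * a + z * b = 0 -> z^* * a + (q - l)%:C * b = 0 ->
  ((p - l) * (q - l) - cabs2 z)%:C *: col2 a b = 0.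
Proof.
move=> e0 e1; apply/eqP; rewrite scale_col2 col2_eq0 rmorphB rmorphM /= -mulcJ_cabs2.
apply/andP; split; apply/eqP.
  transitivity ((q - l)%:C * ((p - l)%:C * a + z * b) - z * (z^* * a + (q - l)%:C * b)).
    by ring.
  by rewrite e0 e1 !mulr0 subrr.
transitivity ((p - l)%:C * (z^* * a + (q - l)%:C * b) - z^* * ((p - l)%:C * a + z * b)).
  by ring.
by rewrite e0 e1 !mulr0 subrr.
Qed.

Lemma spectrum_herm2 p q z l :
  spectrum (herm2 p q z) l <-> (p - l) * (q - l) = cabs2 z.
Proof.
split=> [[v nz_v]|char_eq].
  rewrite [v]col2_eta => /herm2_eigenvector[e0 e1].
  move: (herm2_eigen_det e0 e1); rewrite -col2_eta => /eqP.
  by rewrite scaler_eq0 (negPf nz_v) orbF eq_complex /= eqxx andbT subr_eq0 => /eqP.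
have [/andP[/eqP z0 /eqP lq]|nz] := boolP ((z == 0) && (l == q)).
  exists (col2 0 1); first by rewrite col2_eq0 oner_eq0 andbF.
  by apply/herm2_eigenvector; rewrite z0 lq subrr rmorph0 !(mulr0, mul0r) addr0.
exists (col2 (l - q)%:C z^*).
  by rewrite col2_eq0 conjc_eq0 eq_complex /= eqxx andbT subr_eq0 andbC.
apply/herm2_eigenvector; rewrite mulcJ_cabs2 -char_eq rmorphM !rmorphB /=.
by split; ring.
Qed.

Lemma spectral_gap_herm2 p q z :
  spectral_gap (herm2 p q z) = Num.sqrt ((p - q) ^+ 2 + 4 * cabs2 z).
Proof.
rewrite /spectral_gap; set d := Num.sqrt _.
set lo := (p + q - d) / 2; set hi := (p + q + d) / 2.
have cabs2_d : cabs2 z = (d ^+ 2 - (p - q) ^+ 2) / 4.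
  by rewrite sqr_sqrtr ?addr_ge0 ?sqr_ge0 ?mulr_ge0 ?cabs2_ge0 //; field.
have -> : spectrum (herm2 p q z) = [set lo] `|` [set hi].
  rewrite predeqE => l; rewrite spectrum_herm2 /setU /=.
  have factor : (p - l) * (q - l) - cabs2 z = (l - lo) * (l - hi).
    by rewrite cabs2_d /lo /hi; field.
  split=> [/eqP|lohi].
    by rewrite -subr_eq0 factor mulf_eq0 !subr_eq0 => /orP[]/eqP; [left|right].
  by apply/eqP; rewrite -subr_eq0 factor; case: lohi => ->; rewrite subrr ?mul0r ?mulr0.
have lo_hi : lo <= hi.
  by have := sqrtr_ge0 ((p - q) ^+ 2 + 4 * cabs2 z); rewrite /lo /hi -/d; lra.
rewrite sup_setU ?inf_setU ?sup1 ?inf1 /lo /hi; first by field.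
all: by [exact: has_sup1 | exact: has_inf1 | move=> _ _ -> ->].
Qed.

Lemma hermitian2E M :
  hermitian_mx M -> M = herm2 (complex.Re (M 0 0)) (complex.Re (M 1 1)) (M 0 1).
Proof.
move=> hM; have adjM i j : M i j = (M j i)^* by rewrite {1}hM !mxE.
have real_diag i : M i i = (complex.Re (M i i))%:C.
  by move: (adjM i i); case: (M i i) => x y [] y0; congr Complex; lra.
by rewrite {1}[M]mx2_eta /herm2 (adjM 1 0) -!real_diag.
Qed.

Lemma spectral_gap_hermitian2 M : hermitian_mx M ->
  spectral_gap M = Num.sqrt (2 * frobenius2 (M - (complex.Re (\tr M) / 2)%:C%:M)).
Proof.
move=> /hermitian2E ->; rewrite spectral_gap_herm2 /herm2 mxtrace_mx2 scalar_mx2.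
rewrite -scaleN1r mx2_scale mx2_add frobenius2_mx2.
by case: (M 0 1) => x y; rewrite /cabs2 /=; congr Num.sqrt; field.
Qed.

Lemma sqr_spectral_gap_hermitian2 M : hermitian_mx M ->
  spectral_gap M ^+ 2 = 2 * frobenius2 (M - (complex.Re (\tr M) / 2)%:C%:M).
Proof.
by move=> hM; rewrite spectral_gap_hermitian2 // sqr_sqrtr ?mulr_ge0 ?frobenius2_ge0.
Qed.

End Hermitian2.

Section PauliDecomposition.
Variable R : realType.
Implicit Types M : 'M[R[i]]_2.

Lemma sum_ord4 (V : nmodType) (F : 'I_4 -> V) : \sum_a F a = F 0 + F 1 + F 2 + F 3.
Proof.
rewrite !big_ord_recl big_ord0 addr0 !addrA.
by congr (_ + F _ + F _ + F _); apply: val_inj.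
Qed.

Lemma pauli_mx2 : [/\ pauli R 0 = mx2 1 0 0 1, pauli R 1 = mx2 0 1 1 0,
  pauli R 2 = mx2 0 (- 'i%C) 'i%C 0 & pauli R 3 = mx2 1 0 0 (-1)].
Proof.
by split; apply/matrixP => i j; rewrite !mxE;
  case: i => [[|[|//]] Hi]; case: j => [[|[|//]] Hj].
Qed.

Lemma pauli_sumE (k : 'I_4 -> R[i]) : \sum_a k a *: pauli R a =
  mx2 (k 0 + k 3) (k 1 - 'i%C * k 2) (k 1 + 'i%C * k 2) (k 0 - k 3).
Proof.
rewrite sum_ord4; have [-> -> -> ->] := pauli_mx2; rewrite !mx2_scale !mx2_add.
by congr mx2; ring.
Qed.

Lemma mulii : 'i%C * 'i%C = -1 :> R[i].
Proof. by rewrite -expr2 sqr_i. Qed.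

Definition pauli_coef (M : 'M[R[i]]_2) (a : 'I_4) : R[i] := \tr (pauli R a *m M) / 2.

Lemma pauli_coef_mx2 (a b c d : R[i]) : [/\ pauli_coef (mx2 a b c d) 0 = (a + d) / 2,
  pauli_coef (mx2 a b c d) 1 = (b + c) / 2, pauli_coef (mx2 a b c d) 2 = 'i%C * (b - c) / 2
  & pauli_coef (mx2 a b c d) 3 = (a - d) / 2].
Proof.
rewrite /pauli_coef; have [-> -> -> ->] := pauli_mx2.
by rewrite !mx2_mul !mxtrace_mx2; split; congr (_ / 2); ring.
Qed.

Lemma pauli_expansion M : \sum_a pauli_coef M a *: pauli R a = M.
Proof.
rewrite pauli_sumE [M]mx2_eta.
have [-> -> -> ->] := pauli_coef_mx2 (M 0 0) (M 0 1) (M 1 0) (M 1 1).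
by congr mx2; field: mulii.
Qed.

Lemma ord4P (P : 'I_4 -> Prop) : P 0 -> P 1 -> P 2 -> P 3 -> forall i, P i.
Proof.
move=> P0 P1 P2 P3 [[|[|[|[|//]]]] Ha];
  [rewrite (_ : Ordinal Ha = 0) | rewrite (_ : Ordinal Ha = 1)
  | rewrite (_ : Ordinal Ha = 2) | rewrite (_ : Ordinal Ha = 3)] => //; exact: val_inj.
Qed.

Lemma pauli_coef_adj M (a : 'I_4) : pauli_coef (adjmx M) a = (pauli_coef M a)^*.
Proof.
rewrite [M]mx2_eta adjmx_mx2.
have [c0 c1 c2 c3] := pauli_coef_mx2 (M 0 0) (M 0 1) (M 1 0) (M 1 1).
have [d0 d1 d2 d3] := pauli_coef_mx2 (M 0 0)^* (M 1 0)^* (M 0 1)^* (M 1 1)^*.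
(* [/=] turns [conjc 'i] into [(-1)*i], which [field] does not identify with [- 'i]. *)
have neg_i : ((-1)*i : R[i]) = - 'i%C by apply/eqP; rewrite eq_complex /= oppr0 !eqxx.
move: a; apply: ord4P; rewrite ?(c0, c1, c2, c3, d0, d1, d2, d3).
all: by rewrite !rmorphM fmorphV rmorph_nat !(rmorphB, rmorphD) /= ?neg_i; field.
Qed.

Lemma frobenius2_pauli (k : 'I_4 -> R[i]) :
  frobenius2 (\sum_a k a *: pauli R a) = 2 * \sum_a cabs2 (k a).
Proof.
rewrite pauli_sumE frobenius2_mx2 sum_ord4.
move: (k 0) (k 1) (k 2) (k 3) => [x0 y0] [x1 y1] [x2 y2] [x3 y3].
by rewrite /cabs2 /=; ring.
Qed.

Lemma hermitian_pauli_sum (r : 'I_4 -> R) : hermitian_mx (\sum_a (r a)%:C *: pauli R a).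
Proof.
rewrite /hermitian_mx pauli_sumE adjmx_mx2.
move: (r 0) (r 1) (r 2) (r 3) => x0 x1 x2 x3.
by congr mx2; apply/eqP; rewrite eq_complex /=; apply/andP; split; apply/eqP; ring.
Qed.

Lemma sum_mxtens (V : nmodType) m n (F : 'I_(m * n) -> V) :
  \sum_I F I = \sum_i \sum_k F (mxtens_index (i, k)).
Proof.
rewrite pair_big /= (reindex (@mxtens_index m n)) /=; first by apply: eq_bigr => -[].
by exists (@mxtens_unindex m n) => p _; rewrite (mxtens_indexK, mxtens_unindexK).
Qed.

Lemma sum_tensmx_sub1mx (T : finType) m n1 n2 (B : T -> 'M[R[i]]_m)
    (P : T -> 'M[R[i]]_(n1, n2)) (c : T -> R[i]) :
  \sum_a B a *t P a - 1%:M *t (\sum_a c a *: P a) = \sum_a (B a - (c a)%:M) *t P a.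
Proof.
apply/matrixP => I J; case: (mxtens_indexP I) => i k; case: (mxtens_indexP J) => j l.
rewrite !(mxE, summxE) !mxtens_indexK /= mulr_sumr -sumrB; apply: eq_bigr => a _.
by rewrite !tensmxE !mxE; case: eqP => _; ring.
Qed.

Definition pauli_component m n (h : 'M[R[i]]_(m * 2, n * 2)) (a : 'I_4) :
    'M[R[i]]_(m, n) :=
  \matrix_(i, j) pauli_coef (\matrix_(k, l) h (mxtens_index (i, k)) (mxtens_index (j, l))) a.

Lemma pauli_component_decomposition m n (h : 'M[R[i]]_(m * 2, n * 2)) :
  h = \sum_a pauli_component h a *t pauli R a.
Proof.
apply/matrixP => I J; case: (mxtens_indexP I) => i k; case: (mxtens_indexP J) => j l.
have /matrixP/(_ k l) :=
  pauli_expansion (\matrix_(k, l) h (mxtens_index (i, k)) (mxtens_index (j, l))).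
rewrite !mxE summxE => <-; rewrite summxE; apply: eq_bigr => a _.
by rewrite tensmxE !mxE.
Qed.

Lemma hermitian_pauli_component n (h : 'M[R[i]]_(n * 2)) a :
  hermitian_mx h -> hermitian_mx (pauli_component h a).
Proof.
move=> hh; apply/matrixP => i j; rewrite !mxE -pauli_coef_adj; congr pauli_coef.
by apply/matrixP => k l; rewrite !mxE {1}hh !mxE.
Qed.

Lemma frobenius2_tens_pauli m n (B : 'I_4 -> 'M[R[i]]_(m, n)) :
  frobenius2 (\sum_a B a *t pauli R a) = 2 * \sum_a frobenius2 (B a).
Proof.
have block i j : \sum_k \sum_l cabs2 ((\sum_a B a *t pauli R a)
      (mxtens_index (i, k)) (mxtens_index (j, l))) = 2 * \sum_a cabs2 (B a i j).
  rewrite -frobenius2_pauli; apply: eq_bigr => k _; apply: eq_bigr => l _.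
  by rewrite !summxE; congr cabs2; apply: eq_bigr => a _; rewrite tensmxE !mxE.
rewrite /frobenius2 sum_mxtens.
under eq_bigr => i _ do rewrite (eq_bigr _ (fun k _ => sum_mxtens _)) exchange_big.
under eq_bigr => i _ do under eq_bigr => j _ do rewrite block.
rewrite [in RHS]exchange_big mulr_sumr; apply: eq_bigr => i _.
by rewrite [in RHS]exchange_big mulr_sumr.
Qed.
End PauliDecomposition.

Theorem theorem4p5 (R : realType) (eta : R) (h : 'M[R[i]]_(2 * 2)) :
  hermitian_mx h -> ~ s_gapped h eta ->
  exists g : 'M[R[i]]_2,
    hermitian_mx g /\ opnorm (h - (1%:M : 'M[R[i]]_2) *t g) <= 4 * eta.
Proof.
move=> hh not_gapped; set A := pauli_component h.
have hA a : hermitian_mx (A a) by apply: hermitian_pauli_component.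
have gap_ge0 a : 0 <= spectral_gap (A a) by rewrite spectral_gap_hermitian2 ?sqrtr_ge0.
have gap_lt a : spectral_gap (A a) < eta.
  rewrite ltNge; apply/negP => gap_ge; apply: not_gapped.
  by exists A; split; [apply: pauli_component_decomposition | exists a].
have eta_ge0 := le_trans (gap_ge0 0) (ltW (gap_lt 0)).
pose mid a := complex.Re (\tr (A a)) / 2.
exists (\sum_a (mid a)%:C *: pauli R a); split; first exact: hermitian_pauli_sum.
rewrite {1}(pauli_component_decomposition h) -/A sum_tensmx_sub1mx.
apply: le_trans (opnorm_le_frobenius _) _.
rewrite frobenius2_tens_pauli mulr_sumr.
under eq_bigr => a _ do rewrite -sqr_spectral_gap_hermitian2 //.
have sum_le : \sum_a spectral_gap (A a) ^+ 2 <= (2 * eta) ^+ 2.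
  have -> : (2 * eta) ^+ 2 = \sum_(a < 4) eta ^+ 2 by rewrite sumr_const card_ord; ring.
  by apply: ler_sum => a _; rewrite ler_sqr ?nnegrE // ltW.
apply: le_trans (ler_wsqrtr sum_le) _.
by rewrite sqrtr_sqr ger0_norm ?mulr_ge0 //; lra.
Qed.
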